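(* Let $\Delta\geq 3$ be an integer. If $T$ is a rooted $(\Delta-1)$-ary tree of order $n$, then $$\sum_{u\in V(T)}n^{\downarrow}(u)\geq \frac{\Delta-2}{(\Delta-1)^2}\,n\left(\log_{(\Delta-1)}\big((\Delta-2)n\big)-1\right).$$
   Context: A rooted tree is $(\Delta-1)$-ary if every vertex has at most $\Delta-1$ children. For a vertex $u$ of a rooted tree $T$, $n^{\downarrow}(u)$ denotes the number of vertices of $T$ that are equal to $u$ or are descendants of $u$. *)

From Stdlib Require Import Reals List Arith.
Import ListNotations.

(* A rooted tree (children ordered; the quantities below do not depend on
   the order of children). Every such tree has at least one vertex. *)
Inductive rtree : Type := Node : list rtree -> rtree.

Fixpoint order (t : rtree) : nat :=
  match t with
  | Node ts =>
      S ((fix go (l : list rtree) : nat :=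
            match l with [] => 0 | c :: l' => order c + go l' end) ts)
  end.

(* sum over all vertices u of n_down(u), the size of the subtree rooted at u *)
Fixpoint sum_ndown (t : rtree) : nat :=
  match t with
  | Node ts =>
      order (Node ts) +
      (fix go (l : list rtree) : nat :=
         match l with [] => 0 | c :: l' => sum_ndown c + go l' end) ts
  end.

Fixpoint kary (k : nat) (t : rtree) : Prop :=
  match t with
  | Node ts =>
      length ts <= k /\
      (fix go (l : list rtree) : Prop :=
         match l with [] => True | c :: l' => kary k c /\ go l' end) ts
  end.

Definition logb (b x : R) : R := ln x / ln b.

From Stdlib Require Import Reals Lia Lra List.
Import ListNotations.

(** With the root at depth 0, [sum_ndown t] is the sum over vertices of
    (depth + 1).  A [k]-ary tree has at most [k ^ d] vertices at depth [d], so
    at most [tree_deficit k H] is lost when every vertex is credited only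
    [H] instead of its (depth + 1).  Closed form:
    [(k - 1)^2 * tree_deficit k H = k ^ H - 1 - H (k - 1)].  Choosing [H = m]
    with [k ^ m <= (k - 1) n < k ^ (m + 1)], the deficit is at most [n / (k - 1)],
    which gives [sum_ndown t >= (k - 1) / k ^ 2 * n * m] and
    [m > log_k ((k - 1) n) - 1]. *)

Fixpoint forest_order (ts : list rtree) : nat :=
  match ts with [] => 0 | t :: ts' => order t + forest_order ts' end.

Fixpoint forest_sum_ndown (ts : list rtree) : nat :=
  match ts with [] => 0 | t :: ts' => sum_ndown t + forest_sum_ndown ts' end.

Fixpoint forest_kary (k : nat) (ts : list rtree) : Prop :=
  match ts with [] => True | t :: ts' => kary k t /\ forest_kary k ts' end.

Lemma order_Node ts : order (Node ts) = S (forest_order ts).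
Proof. reflexivity. Qed.

Lemma sum_ndown_Node ts :
  sum_ndown (Node ts) = (order (Node ts) + forest_sum_ndown ts)%nat.
Proof. reflexivity. Qed.

Lemma kary_Node k ts :
  kary k (Node ts) -> (length ts <= k)%nat /\ forest_kary k ts.
Proof.
  intros [Hlen Hts]; split; [exact Hlen |].
  clear Hlen; induction ts as [| t ts IH]; simpl in *; [exact I | tauto].
Qed.

Definition rtree_forest_ind (P : rtree -> Prop) (Q : list rtree -> Prop)
  (Hnil : Q []) (Hcons : forall t ts, P t -> Q ts -> Q (t :: ts))
  (HNode : forall ts, Q ts -> P (Node ts)) : forall t, P t :=
  fix f t :=
    match t with
    | Node ts =>
        HNode ts ((fix g ts := match ts return Q ts with
                               | [] => Hnil
                               | t :: ts' => Hcons t ts' (f t) (g ts')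
                               end) ts)
    end.

Lemma order_pos t : (1 <= order t)%nat.
Proof. destruct t; rewrite order_Node; lia. Qed.

Lemma order_le_sum_ndown t : (order t <= sum_ndown t)%nat.
Proof. destruct t; rewrite sum_ndown_Node; lia. Qed.

(** [tree_deficit k H = sum_(d < H) k ^ d * (H - 1 - d)]. *)
Fixpoint tree_deficit (k H : nat) : nat :=
  match H with 0 => 0 | S H' => H' + k * tree_deficit k H' end.

Lemma tree_deficit_closed_form j H :
  (tree_deficit (S j) H * (j * j) + H * j + 1 = S j ^ H)%nat.
Proof.
  induction H as [| H IH]; simpl tree_deficit; [simpl; lia |].
  rewrite Nat.pow_succ_r', <- IH; nia.
Qed.

Lemma sum_ndown_ge_deficit k t : kary k t -> forall H,
  (H * order t <= sum_ndown t + tree_deficit k H)%nat.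
Proof.
  revert t.
  apply (rtree_forest_ind
    (fun t => kary k t -> forall H,
       H * order t <= sum_ndown t + tree_deficit k H)%nat
    (fun ts => forest_kary k ts -> forall H,
       H * forest_order ts
       <= forest_sum_ndown ts + length ts * tree_deficit k H)%nat).
  - simpl; lia.
  - intros t ts IHt IHts [Ht Hts] H; simpl.
    specialize (IHt Ht H); specialize (IHts Hts H); nia.
  - intros ts IHts Hk [| H]; [lia |].
    destruct (kary_Node _ _ Hk) as [Hlen Hts].
    specialize (IHts Hts H).
    rewrite sum_ndown_Node, order_Node; simpl tree_deficit.
    assert (length ts * tree_deficit k H <= k * tree_deficit k H)%nat by nia.
    nia.
Qed.

Lemma exists_pow_bracket k z : (2 <= k)%nat -> (1 <= z)%nat ->
  exists m, (k ^ m <= z < k ^ S m)%nat.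
Proof.
  intros Hk Hz; induction z as [| z IH]; [lia |].
  destruct (Nat.eq_0_gt_0_cases z) as [-> | Hz0]; [exists 0%nat; simpl; lia |].
  destruct (IH Hz0) as [m Hm].
  destruct (Nat.eq_dec (S z) (k ^ S m)) as [E | E].
  - exists (S m); rewrite (Nat.pow_succ_r' k (S m)); nia.
  - exists m; lia.
Qed.

Lemma sum_ndown_lower_bound k t m : (2 <= k)%nat -> kary k t ->
  (k ^ m <= (k - 1) * order t)%nat ->
  ((k - 1) * order t * m <= k * k * sum_ndown t)%nat.
Proof.
  intros Hk Ht Hm.
  pose proof (order_le_sum_ndown t) as Hs.
  destruct m as [| [| m']]; [lia | nia |].
  set (m := S (S m')) in *.
  destruct k as [| j]; [lia |].
  rewrite Nat.sub_succ, Nat.sub_0_r in *.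
  pose proof (sum_ndown_ge_deficit _ _ Ht m) as Hdef.
  pose proof (tree_deficit_closed_form j m) as Hclosed.
  assert (Hj : (j * tree_deficit (S j) m <= order t)%nat) by nia.
  (* Multiplied by [j], the claim needs only [(j + 1)^2 <= 2 j (j^2 + j + 1)]. *)
  apply (Nat.mul_le_mono_pos_l _ _ j); [lia |].
  assert (S j * S j <= m * j * (j * j + j + 1))%nat by nia.
  nia.
Qed.

Open Scope R_scope.

Lemma logb_lt_pow (b x : R) (m : nat) : 1 < b -> 0 < x -> x < b ^ S m ->
  logb b x < INR (S m).
Proof.
  intros Hb Hx Hxb.
  assert (Hlnb : 0 < ln b) by (rewrite <- ln_1; apply ln_increasing; lra).
  unfold logb; apply Rmult_lt_reg_r with (ln b); [exact Hlnb |].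
  unfold Rdiv; rewrite Rmult_assoc, Rinv_l, Rmult_1_r by lra.
  rewrite <- ln_pow by lra; apply ln_increasing; assumption.
Qed.

Theorem lemma3 (D : nat) (T : rtree) :
  (3 <= D)%nat -> kary (D - 1) T ->
  INR (sum_ndown T) >=
    INR (D - 2) / (INR (D - 1)) ^ 2 * INR (order T) *
    (logb (INR (D - 1)) (INR (D - 2) * INR (order T)) - 1).
Proof.
  intros HD HT.
  replace (D - 2)%nat with (D - 1 - 1)%nat by lia.
  set (k := (D - 1)%nat) in *.
  assert (Hk : (2 <= k)%nat) by lia.
  assert (Hkpos : 0 < INR k) by (apply lt_0_INR; lia).
  pose proof (order_pos T) as Hn.
  destruct (exists_pow_bracket k ((k - 1) * order T) Hk ltac:(nia)) as [m [Hlo Hhi]].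
  assert (Hlog : logb (INR k) (INR (k - 1) * INR (order T)) - 1 <= INR m).
  { rewrite <- mult_INR.
    pose proof (logb_lt_pow (INR k) (INR ((k - 1) * order T)) m) as Hlt.
    rewrite <- pow_INR, S_INR in Hlt.
    assert (logb (INR k) (INR ((k - 1) * order T)) < INR m + 1).
    { apply Hlt; [apply (lt_INR 1) | apply (lt_INR 0) | apply lt_INR]; nia. }
    lra. }
  pose proof (le_INR _ _ (sum_ndown_lower_bound k T m Hk HT Hlo)) as Hs.
  rewrite !mult_INR in Hs.
  apply Rle_ge, Rle_trans with (INR (k - 1) / INR k ^ 2 * INR (order T) * INR m).
  - apply Rmult_le_compat_l; [| exact Hlog].
    apply Rmult_le_pos; [apply Rle_mult_inv_pos | ]; try apply pos_INR.
    apply pow_lt; exact Hkpos.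
  - apply Rmult_le_reg_l with (INR k ^ 2); [apply pow_lt; exact Hkpos |].
    replace (INR k ^ 2 * (INR (k - 1) / INR k ^ 2 * INR (order T) * INR m))
      with (INR (k - 1) * INR (order T) * INR m) by (field; lra).
    simpl; lra.
Qed.
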